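(* There is a computable coloring $c:\mathcal{P}_{fin}(\mathbb{N})\rightarrow\{0,1\}$ such that for every computably enumerable $\mathcal{S}\subseteq\mathcal{P}_{fin}(\mathbb{N})$ which contains infinitely many pairwise disjoint elements, $c$ is not constant on $NU(\mathcal{S})$.
   Context: $\mathcal{P}_{fin}(\mathbb{N})$ is the set of finite subsets of $\mathbb{N}$, identified with $\mathbb{N}$ via a fixed computable bijection (e.g. a finite set corresponds to the number whose binary expansion has 1s exactly at its elements); computability and computable enumerability of subsets of and functions on $\mathcal{P}_{fin}(\mathbb{N})$ are with respect to this identification. For $\mathcal{S}\subseteq\mathcal{P}_{fin}(\mathbb{N})$, $NU(\mathcal{S})$ denotes the set of non-empty sets which are unions of finitely many elements of $\mathcal{S}$. *)

(* Computability is formalised via Kleene's partial recursive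
   functions (mu-recursive codes with a big-step evaluation relation). *)
From Stdlib Require Import Arith List.
Import ListNotations.

Inductive code : Type :=
| Zero : code
| Succ : code
| Proj : nat -> code
| Comp : code -> list code -> code
| Prec : code -> code -> code
| Mu   : code -> code.

Inductive eval : code -> list nat -> nat -> Prop :=
| eZero v : eval Zero v 0
| eSucc v : eval Succ v (S (hd 0 v))
| eProj i v : eval (Proj i) v (nth i v 0)
| eComp f gs v ws y : evals gs v ws -> eval f ws y -> eval (Comp f gs) v y
| ePrec0 f g v y : eval f v y -> eval (Prec f g) (0 :: v) y
| ePrecS f g n v r y :
    eval (Prec f g) (n :: v) r -> eval g (n :: r :: v) y ->
    eval (Prec f g) (S n :: v) y
| eMu f v n :
    eval f (n :: v) 0 ->
    (forall m, m < n -> exists k, eval f (m :: v) (S k)) ->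
    eval (Mu f) v n
with evals : list code -> list nat -> list nat -> Prop :=
| esNil v : evals [] v []
| esCons g gs v y ys : eval g v y -> evals gs v ys -> evals (g :: gs) v (y :: ys).

(** Finite subsets of N are identified with naturals via binary expansion:
    the set coded by [a] is { k | Nat.testbit a k = true }. *)
Definition fin_mem (k a : nat) : Prop := Nat.testbit a k = true.

Definition fin_disjoint (a b : nat) : Prop := forall k, ~ (fin_mem k a /\ fin_mem k b).

(** Union of finite sets = bitwise or of codes; empty set = 0. *)
Definition fin_union_list (l : list nat) : nat := fold_right Nat.lor 0 l.

Definition computable_coloring (c : nat -> bool) : Prop :=
  exists e : code, forall n, eval e [n] (if c n then 1 else 0).

Definition c_e (S : nat -> Prop) : Prop :=
  exists e : code, forall n, S n <-> exists y, eval e [n] y.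

Definition inf_pairwise_disjoint (S : nat -> Prop) : Prop :=
  exists f : nat -> nat,
    (forall i, S (f i)) /\
    (forall i j, i <> j -> f i <> f j) /\
    (forall i j, i <> j -> fin_disjoint (f i) (f j)).

Definition NU (S : nat -> Prop) (a : nat) : Prop :=
  a <> 0 /\ exists l : list nat, (forall x, In x l -> S x) /\ a = fin_union_list l.

(* The colour of a set a depends only on its minimum m and on a itself used as
   a stage of a priority construction: it is the colour which the stage-a
   approximation assigns to m.  Requirement k = <e, b> asks that some minimum
   of a nonempty set enumerated by program e gets colour b.  At stage t, k is a
   candidate at m if m is already seen to be such a minimum and k is not yet
   satisfied below m; the least candidate k <= m gives m its colour b.  Thus
   each requirement acts at most once, and the approximations stabilise.  If
   NU(S) had constant colour kap, unions of a member with members of larger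
   minimum would show that every minimum has limit colour kap; then the requirement
   k0 = <e, not kap> is a candidate at k0 + 1 minima, none of which it can
   colour, while the k0 smaller requirements act at most once each. *)

From Stdlib Require Import Arith List Lia Bool Classical.
Import ListNotations.

Fixpoint recf (n b : nat) (s : nat -> nat -> nat) : nat :=
  match n with 0 => b | S n => s n (recf n b s) end.

Fixpoint sumf (n : nat) (f : nat -> nat) : nat :=
  match n with 0 => 0 | S n => sumf n f + f n end.

Lemma sumf_as_recf n f : sumf n f = recf n 0 (fun i r => r + f i).
Proof. induction n; simpl; congruence. Qed.

Lemma eval_prec f g v b s :
  eval f v b -> (forall i r, eval g (i :: r :: v) (s i r)) ->
  forall n, eval (Prec f g) (n :: v) (recf n b s).
Proof. intros Hf Hg n; induction n; simpl; [constructor | eapply ePrecS]; eauto. Qed.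

Lemma eval_proj i v y : y = nth i v 0 -> eval (Proj i) v y.
Proof. intros ->; constructor. Qed.

Lemma eval_comp1 f g v a y : eval g v a -> eval f [a] y -> eval (Comp f [g]) v y.
Proof. intros; econstructor; [repeat constructor|]; eauto. Qed.

Lemma eval_comp2 f g1 g2 v a b y :
  eval g1 v a -> eval g2 v b -> eval f [a; b] y -> eval (Comp f [g1; g2]) v y.
Proof. intros; econstructor; [repeat constructor|]; eauto. Qed.

Create HintDb eval_codes.

Ltac eval_step :=
  first [ now apply eval_proj | solve [eauto with eval_codes]
        | eapply eval_comp1 | eapply eval_comp2 | constructor ].

Definition add_code := Prec (Proj 0) (Comp Succ [Proj 1]).
Lemma add_code_spec a b : eval add_code [a; b] (a + b).
Proof.
  replace (a + b) with (recf a b (fun _ r => S r)) by (induction a; simpl; auto).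
  apply eval_prec; intros; repeat eval_step.
Qed.
#[local] Hint Resolve add_code_spec : eval_codes.

Definition mul_code := Prec Zero (Comp add_code [Proj 1; Proj 2]).
Lemma mul_code_spec a b : eval mul_code [a; b] (a * b).
Proof.
  replace (a * b) with (recf a 0 (fun _ r => r + b)) by (induction a; simpl; lia).
  apply eval_prec; intros; repeat eval_step.
Qed.
#[local] Hint Resolve mul_code_spec : eval_codes.

Definition pred_code := Prec Zero (Proj 0).
Lemma pred_code_spec n : eval pred_code [n] (pred n).
Proof.
  replace (pred n) with (recf n 0 (fun i _ => i)) by (destruct n; auto).
  apply eval_prec; intros; repeat eval_step.
Qed.
#[local] Hint Resolve pred_code_spec : eval_codes.

Definition sub_code := Comp (Prec (Proj 0) (Comp pred_code [Proj 1])) [Proj 1; Proj 0].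
Lemma sub_code_spec a b : eval sub_code [a; b] (a - b).
Proof.
  eapply eval_comp2; [eval_step | eval_step |].
  replace (a - b) with (recf b a (fun _ r => pred r)) by (induction b; simpl; lia).
  apply eval_prec; intros; repeat eval_step.
Qed.
#[local] Hint Resolve sub_code_spec : eval_codes.

Fixpoint tri (w : nat) : nat := match w with 0 => 0 | S w => tri w + S w end.

Definition tri_code := Prec Zero (Comp add_code [Proj 1; Comp Succ [Proj 0]]).
Lemma tri_code_spec w : eval tri_code [w] (tri w).
Proof.
  replace (tri w) with (recf w 0 (fun i r => r + S i)) by (induction w; simpl; auto).
  apply eval_prec; intros; repeat eval_step.
Qed.
#[local] Hint Resolve tri_code_spec : eval_codes.

Definition cpair (a b : nat) : nat := b + tri (a + b).
Definition cpair_code := Comp add_code [Proj 1; Comp tri_code [Comp add_code [Proj 0; Proj 1]]].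
Lemma cpair_code_spec a b : eval cpair_code [a; b] (cpair a b).
Proof. repeat eval_step. Qed.
#[local] Hint Resolve cpair_code_spec : eval_codes.

Definition root (n : nat) : nat := sumf n (fun i => 1 - (tri (S i) - n)).
Definition root_code :=
  Comp (Prec Zero (Comp add_code [Proj 1; Comp sub_code [Comp Succ [Zero];
          Comp sub_code [Comp tri_code [Comp Succ [Proj 0]]; Proj 2]]]))
       [Proj 0; Proj 0].
Lemma root_code_spec n : eval root_code [n] (root n).
Proof.
  eapply eval_comp2; [eval_step | eval_step |].
  replace (root n) with (recf n 0 (fun i r => r + (1 - (tri (S i) - n)))).
  - apply eval_prec; intros; repeat eval_step.
  - symmetry; apply sumf_as_recf.
Qed.
#[local] Hint Resolve root_code_spec : eval_codes.

Definition csnd (n : nat) : nat := n - tri (root n).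
Definition cfst (n : nat) : nat := root n - csnd n.

Definition csnd_code := Comp sub_code [Proj 0; Comp tri_code [root_code]].
Lemma csnd_code_spec n : eval csnd_code [n] (csnd n).
Proof. repeat eval_step. Qed.
#[local] Hint Resolve csnd_code_spec : eval_codes.

Definition cfst_code := Comp sub_code [root_code; csnd_code].
Lemma cfst_code_spec n : eval cfst_code [n] (cfst n).
Proof. repeat eval_step. Qed.
#[local] Hint Resolve cfst_code_spec : eval_codes.

Lemma tri_mono a b : a <= b -> tri a <= tri b.
Proof. induction 1; simpl; lia. Qed.

Lemma tri_ge w : w <= tri w.
Proof. induction w; simpl; lia. Qed.

Lemma sumf_ext n f g : (forall i, i < n -> f i = g i) -> sumf n f = sumf n g.
Proof. induction n; simpl; intros; auto. rewrite IHn, H; auto. Qed.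

Lemma sumf_term_le n f i : i < n -> f i <= sumf n f.
Proof.
  induction n; cbn [sumf]; intros Hi; [lia |].
  destruct (Nat.eq_dec i n); [subst; lia | specialize (IHn ltac:(lia)); lia].
Qed.

Lemma sumf_indicator n w : w <= n -> sumf n (fun i => if i <? w then 1 else 0) = w.
Proof.
  intros Hw; enough (sumf n (fun i => if i <? w then 1 else 0) = Nat.min n w) by lia.
  clear Hw; induction n; [reflexivity|]; cbn [sumf].
  rewrite IHn; destruct (Nat.ltb_spec n w); lia.
Qed.

Lemma root_spec n w : tri w <= n < tri (S w) -> root n = w.
Proof.
  intros [H1 H2]; unfold root.
  rewrite (sumf_ext _ _ (fun i => if i <? w then 1 else 0)).
  - apply sumf_indicator; pose proof (tri_ge w); lia.
  - intros i Hi; destruct (Nat.ltb_spec i w).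
    + assert (tri (S i) <= tri w) by (apply tri_mono; lia); lia.
    + assert (tri (S w) <= tri (S i)) by (apply tri_mono; lia); lia.
Qed.

Lemma root_exists n : exists w, tri w <= n < tri (S w).
Proof.
  induction n as [|n [w Hw]]; [exists 0; simpl; lia|].
  destruct (Nat.eq_dec (S n) (tri (S w))); [exists (S w) | exists w]; simpl in *; lia.
Qed.

Lemma cfst_cpair a b : cfst (cpair a b) = a.
Proof. unfold cfst, csnd, cpair; rewrite (root_spec _ (a + b)); simpl; lia. Qed.

Lemma csnd_cpair a b : csnd (cpair a b) = b.
Proof. unfold csnd, cpair; rewrite (root_spec _ (a + b)); simpl; lia. Qed.

Lemma cpair_surj n : cpair (cfst n) (csnd n) = n.
Proof.
  destruct (root_exists n) as [w Hw]; unfold cfst, csnd, cpair.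
  rewrite (root_spec _ w Hw); simpl in Hw.
  replace (w - (n - tri w) + (n - tri w)) with w by lia; lia.
Qed.

Lemma cpair_ge_fst a b : a <= cpair a b.
Proof. unfold cpair; pose proof (tri_ge (a + b)); lia. Qed.

Lemma csnd_le n : csnd n <= n.
Proof. unfold csnd; lia. Qed.

Lemma cfst_le n : cfst n <= n.
Proof. rewrite <- (cpair_surj n) at 2; apply cpair_ge_fst. Qed.

(* A unary function computed by some code.  Functions of several arguments
   are handled through Cantor pairing. *)
Definition computable1 (f : nat -> nat) : Prop := exists c, forall n, eval c [n] (f n).

Lemma computable_ext f g : (forall n, f n = g n) -> computable1 f -> computable1 g.
Proof. intros E [c Hc]; exists c; intros n; rewrite <- E; apply Hc. Qed.

Lemma computable_id : computable1 (fun n => n).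
Proof. exists (Proj 0); intros; now apply eval_proj. Qed.

Fixpoint const_code (k : nat) : code :=
  match k with 0 => Zero | S k => Comp Succ [const_code k] end.

Lemma computable_const k : computable1 (fun _ => k).
Proof.
  exists (const_code k); intros n; induction k; simpl; [constructor | eapply eval_comp1; eauto].
  constructor.
Qed.

Lemma computable_comp f g : computable1 f -> computable1 g -> computable1 (fun n => f (g n)).
Proof. intros [cf Hf] [cg Hg]; exists (Comp cf [cg]); intros; eapply eval_comp1; eauto. Qed.

Lemma computable_binop (op : nat -> nat -> nat) c F G :
  (forall a b, eval c [a; b] (op a b)) -> computable1 F -> computable1 G ->
  computable1 (fun n => op (F n) (G n)).
Proof. intros Hc [cF HF] [cG HG]; exists (Comp c [cF; cG]); intros; eapply eval_comp2; eauto. Qed.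

Lemma computable_add F G : computable1 F -> computable1 G -> computable1 (fun n => F n + G n).
Proof. apply computable_binop with add_code; auto with eval_codes. Qed.

Lemma computable_sub F G : computable1 F -> computable1 G -> computable1 (fun n => F n - G n).
Proof. apply computable_binop with sub_code; auto with eval_codes. Qed.

Lemma computable_mul F G : computable1 F -> computable1 G -> computable1 (fun n => F n * G n).
Proof. apply computable_binop with mul_code; auto with eval_codes. Qed.

Lemma computable_cpair F G :
  computable1 F -> computable1 G -> computable1 (fun n => cpair (F n) (G n)).
Proof. apply computable_binop with cpair_code; auto with eval_codes. Qed.

Lemma computable_cfst F : computable1 F -> computable1 (fun n => cfst (F n)).
Proof. apply computable_comp; exists cfst_code; auto with eval_codes. Qed.

Lemma computable_csnd F : computable1 F -> computable1 (fun n => csnd (F n)).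
Proof. apply computable_comp; exists csnd_code; auto with eval_codes. Qed.

(* Primitive recursion with a parameter; the step function receives the
   counter, the previous value and the parameter packed as one number. *)
Lemma computable_rec N B (St : nat -> nat -> nat -> nat) :
  computable1 N -> computable1 B ->
  computable1 (fun q => St (cfst q) (cfst (csnd q)) (csnd (csnd q))) ->
  computable1 (fun n => recf (N n) (B n) (fun i r => St i r n)).
Proof.
  intros [cN HN] [cB HB] [cS HS].
  exists (Comp (Prec cB (Comp cS [Comp cpair_code [Proj 0; Comp cpair_code [Proj 1; Proj 2]]]))
               [cN; Proj 0]).
  intros n; eapply eval_comp2; [apply HN | now apply eval_proj |].
  apply eval_prec; [apply HB |]; intros i r.
  apply eval_comp1 with (a := cpair i (cpair r n)); [repeat eval_step |].
  specialize (HS (cpair i (cpair r n))); now rewrite csnd_cpair, !cfst_cpair, csnd_cpair in HS.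
Qed.

(* Bounded sums; the summand receives the index and the parameter paired. *)
Lemma computable_sum N (F : nat -> nat -> nat) :
  computable1 N -> computable1 (fun q => F (cfst q) (csnd q)) ->
  computable1 (fun n => sumf (N n) (fun i => F i n)).
Proof.
  intros HN HF; apply (computable_ext (fun n => recf (N n) 0 (fun i r => r + F i n))).
  { intros; symmetry; apply sumf_as_recf. }
  apply (computable_rec N (fun _ => 0) (fun i r n => r + F i n));
    [exact HN | apply computable_const |].
  apply computable_add; [apply computable_cfst, computable_csnd, computable_id |].
  apply (computable_ext (fun q => F (cfst (cpair (cfst q) (csnd (csnd q))))
                                  (csnd (cpair (cfst q) (csnd (csnd q)))))).
  { intros; now rewrite cfst_cpair, csnd_cpair. }
  apply (computable_comp _ _ HF), computable_cpair;
    [apply computable_cfst | apply computable_csnd, computable_csnd]; apply computable_id.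
Qed.

Ltac arith_computability :=
  repeat first
    [ assumption | apply computable_id | apply computable_const
    | apply computable_cpair | apply computable_cfst | apply computable_csnd
    | apply computable_add | apply computable_sub | apply computable_mul
    | match goal with
      | H : computable1 ?f |- computable1 (fun x => ?f (@?g x)) => apply (computable_comp f g H)
      end ].

Fixpoint bex (n : nat) (p : nat -> bool) : bool :=
  match n with 0 => false | S n => bex n p || p n end.

Definition ball (n : nat) (p : nat -> bool) : bool := negb (bex n (fun i => negb (p i))).

Lemma bex_spec n p : bex n p = true <-> exists i, i < n /\ p i = true.
Proof.
  induction n; simpl; [split; [discriminate | intros [i [Hi _]]; lia] |].
  rewrite orb_true_iff, IHn; split.
  - intros [[i [H1 H2]] | H]; [exists i; split; auto; lia | exists n; auto].
  - intros [i [H1 H2]]; destruct (Nat.eq_dec i n); [subst; auto | left; exists i; split; auto; lia].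
Qed.

Lemma ball_spec n p : ball n p = true <-> forall i, i < n -> p i = true.
Proof.
  unfold ball; rewrite negb_true_iff; split.
  - intros H i Hi; destruct (p i) eqn:E; auto.
    enough (bex n (fun i => negb (p i)) = true) by congruence.
    apply bex_spec; exists i; rewrite E; auto.
  - intros H; destruct (bex _ _) eqn:E; auto.
    apply bex_spec in E as [i [H1 H2]]; rewrite H in H2; auto; discriminate.
Qed.

Lemma bex_ext n p q : (forall i, i < n -> p i = q i) -> bex n p = bex n q.
Proof. induction n; simpl; intros; auto. rewrite IHn, H; auto. Qed.

Lemma ball_ext n p q : (forall i, i < n -> p i = q i) -> ball n p = ball n q.
Proof. intros H; unfold ball; f_equal; apply bex_ext; intros; rewrite H; auto. Qed.

Lemma bex_mono n n' p q :
  bex n p = true -> n <= n' -> (forall i, p i = true -> q i = true) -> bex n' q = true.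
Proof. rewrite !bex_spec; intros [i [Hi Hp]] ? ?; exists i; split; auto; lia. Qed.

Lemma ball_mono n p q : ball n p = true -> (forall i, p i = true -> q i = true) -> ball n q = true.
Proof. rewrite !ball_spec; auto. Qed.

(* Boolean functions are computable through their 0/1 indicator [Nat.b2n]. *)
Lemma computable_andb P Q :
  computable1 (fun n => Nat.b2n (P n)) -> computable1 (fun n => Nat.b2n (Q n)) ->
  computable1 (fun n => Nat.b2n (P n && Q n)).
Proof.
  intros; apply (computable_ext (fun n => Nat.b2n (P n) * Nat.b2n (Q n))); [|arith_computability].
  intros n; destruct (P n), (Q n); reflexivity.
Qed.

Lemma computable_negb P :
  computable1 (fun n => Nat.b2n (P n)) -> computable1 (fun n => Nat.b2n (negb (P n))).
Proof.
  intros; apply (computable_ext (fun n => 1 - Nat.b2n (P n))); [|arith_computability].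
  intros n; destruct (P n); reflexivity.
Qed.

Lemma computable_orb P Q :
  computable1 (fun n => Nat.b2n (P n)) -> computable1 (fun n => Nat.b2n (Q n)) ->
  computable1 (fun n => Nat.b2n (P n || Q n)).
Proof.
  intros; apply (computable_ext (fun n => 1 - (1 - Nat.b2n (P n)) * (1 - Nat.b2n (Q n))));
    [|arith_computability].
  intros n; destruct (P n), (Q n); reflexivity.
Qed.

Lemma computable_leb F G :
  computable1 F -> computable1 G -> computable1 (fun n => Nat.b2n (F n <=? G n)).
Proof.
  intros; apply (computable_ext (fun n => 1 - (F n - G n))); [|arith_computability].
  intros n; destruct (Nat.leb_spec (F n) (G n)); cbn [Nat.b2n]; lia.
Qed.

Lemma computable_ltb F G :
  computable1 F -> computable1 G -> computable1 (fun n => Nat.b2n (F n <? G n)).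
Proof.
  intros; apply (computable_ext (fun n => Nat.b2n (F n + 1 <=? G n))).
  - intros n; now rewrite Nat.add_1_r.
  - apply computable_leb; arith_computability.
Qed.

Lemma computable_eqb F G :
  computable1 F -> computable1 G -> computable1 (fun n => Nat.b2n (F n =? G n)).
Proof.
  intros; apply (computable_ext (fun n => Nat.b2n ((F n <=? G n) && (G n <=? F n)))).
  - intros n; destruct (Nat.eqb_spec (F n) (G n)), (Nat.leb_spec (F n) (G n)),
      (Nat.leb_spec (G n) (F n)); cbn [Nat.b2n andb]; lia.
  - apply computable_andb; apply computable_leb; auto.
Qed.

Lemma computable_if C X Y :
  computable1 (fun n => Nat.b2n (C n)) -> computable1 X -> computable1 Y ->
  computable1 (fun n => if C n then X n else Y n).
Proof.
  intros; apply (computable_ext (fun n => Nat.b2n (C n) * X n + (1 - Nat.b2n (C n)) * Y n));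
    [|arith_computability].
  intros n; destruct (C n); cbn [Nat.b2n]; lia.
Qed.

Lemma computable_b2n_if C P Q :
  computable1 (fun n => Nat.b2n (C n)) -> computable1 (fun n => Nat.b2n (P n)) ->
  computable1 (fun n => Nat.b2n (Q n)) ->
  computable1 (fun n => Nat.b2n (if C n then P n else Q n)).
Proof.
  intros; apply (computable_ext (fun n => if C n then Nat.b2n (P n) else Nat.b2n (Q n))).
  - intros n; now destruct (C n).
  - now apply computable_if.
Qed.

Lemma computable_bex N (P : nat -> nat -> bool) :
  computable1 N -> computable1 (fun q => Nat.b2n (P (cfst q) (csnd q))) ->
  computable1 (fun n => Nat.b2n (bex (N n) (fun i => P i n))).
Proof.
  intros HN HP.
  apply (computable_ext (fun n => 1 - (1 - sumf (N n) (fun i => Nat.b2n (P i n))))).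
  - intros n; induction (N n) as [|k IH]; [reflexivity|]; cbn [sumf bex].
    destruct (P k n), (bex k (fun i => P i n)); cbn [Nat.b2n orb] in *; lia.
  - apply computable_sub, computable_sub, computable_sum; auto; apply computable_const.
Qed.

Lemma computable_ball N (P : nat -> nat -> bool) :
  computable1 N -> computable1 (fun q => Nat.b2n (P (cfst q) (csnd q))) ->
  computable1 (fun n => Nat.b2n (ball (N n) (fun i => P i n))).
Proof.
  intros HN HP; unfold ball.
  apply computable_negb, (computable_bex N (fun i n => negb (P i n))), computable_negb; auto.
Qed.

Lemma computable_pow2 F : computable1 F -> computable1 (fun n => 2 ^ F n).
Proof.
  intros HF; apply (computable_ext (fun n => recf (F n) 1 (fun _ r => r + r))).
  - intros n; induction (F n); simpl; lia.
  - apply (computable_rec F (fun _ => 1) (fun _ r _ => r + r)); arith_computability.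
Qed.

(* Division, as the number of multiples of the divisor below the dividend;
   binary digits are then extracted arithmetically. *)
Lemma computable_div A D :
  computable1 A -> computable1 D -> (forall n, D n <> 0) ->
  computable1 (fun n => A n / D n).
Proof.
  intros HA HD HD0.
  apply (computable_ext (fun n => sumf (A n) (fun i => Nat.b2n ((i + 1) * D n <=? A n)))).
  - intros n; rewrite (sumf_ext _ _ (fun i => if i <? A n / D n then 1 else 0)).
    + apply sumf_indicator, Nat.Div0.div_le_upper_bound; specialize (HD0 n); nia.
    + intros i Hi; pose proof (Nat.Div0.mul_div_le (A n) (D n)).
      pose proof (Nat.div_le_lower_bound (A n) (D n) (i + 1) (HD0 n)).
      destruct (Nat.ltb_spec i (A n / D n)), (Nat.leb_spec ((i + 1) * D n) (A n));
        simpl; auto; nia.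
  - apply (computable_sum A (fun i n => Nat.b2n ((i + 1) * D n <=? A n))); auto.
    apply computable_leb; arith_computability.
Qed.

Lemma computable_testbit A J :
  computable1 A -> computable1 J -> computable1 (fun n => Nat.b2n (Nat.testbit (A n) (J n))).
Proof.
  intros HA HJ.
  apply (computable_ext (fun n => A n / 2 ^ J n - 2 * (A n / 2 ^ J n / 2))).
  - intros n; rewrite Nat.testbit_spec', Nat.Div0.mod_eq; reflexivity.
  - assert (Hq : computable1 (fun n => A n / 2 ^ J n)).
    { apply computable_div; auto using computable_pow2; intros; apply Nat.pow_nonzero; lia. }
    apply computable_sub, computable_mul; auto; [apply computable_const |].
    apply computable_div; auto using computable_const.
Qed.

Lemma computable_iter N f X :
  computable1 N -> computable1 f -> computable1 X ->
  computable1 (fun n => Nat.iter (N n) f (X n)).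
Proof.
  intros HN Hf HX; apply (computable_ext (fun n => recf (N n) (X n) (fun _ r => f r))).
  - intros n; induction (N n); simpl; congruence.
  - apply (computable_rec N X (fun _ r _ => f r)); arith_computability.
Qed.

Ltac computability_with extra :=
  repeat first
    [ extra | assumption | apply computable_id | apply computable_const
    | apply computable_cpair | apply computable_cfst | apply computable_csnd
    | apply computable_add | apply computable_sub | apply computable_mul
    | apply computable_andb | apply computable_orb | apply computable_negb
    | apply computable_ltb | apply computable_eqb | apply computable_leb
    | apply computable_b2n_if
    | apply computable_bex | apply computable_ball | apply computable_sum | apply computable_rec
    | apply computable_pow2 | apply computable_testbit | apply computable_iter
    | match goal with
      | H : computable1 ?f |- computable1 (fun x => ?f (@?g x)) => apply (computable_comp f g H)
      end ].

Ltac computability := computability_with fail.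

(* Lists of numbers coded by iterated pairing; [0] is the empty list. *)
Definition lcons (x l : nat) : nat := cpair x l + 1.
Definition lhd (l : nat) : nat := cfst (l - 1).
Definition ltl (l : nat) : nat := csnd (l - 1).

Fixpoint enc_list (l : list nat) : nat :=
  match l with [] => 0 | x :: l => lcons x (enc_list l) end.

Lemma lhd_cons x l : lhd (lcons x l) = x.
Proof. unfold lhd, lcons; rewrite Nat.add_sub; apply cfst_cpair. Qed.

Lemma ltl_cons x l : ltl (lcons x l) = l.
Proof. unfold ltl, lcons; rewrite Nat.add_sub; apply csnd_cpair. Qed.

Lemma lcons_eqb0 x l : (lcons x l =? 0) = false.
Proof. unfold lcons; now rewrite Nat.add_1_r. Qed.

Lemma lhd_nil : lhd 0 = 0.
Proof. pose proof (cfst_le 0); unfold lhd; simpl; lia. Qed.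

Lemma ltl_nil : ltl 0 = 0.
Proof. pose proof (csnd_le 0); unfold ltl; simpl; lia. Qed.

Lemma lhd_enc_list v : lhd (enc_list v) = hd 0 v.
Proof. destruct v; simpl; [apply lhd_nil | apply lhd_cons]. Qed.

Lemma iter_ltl_nil i : Nat.iter i ltl 0 = 0.
Proof. induction i; simpl; [|rewrite IHi, ltl_nil]; reflexivity. Qed.

Lemma nth_enc_list i v : nth i v 0 = lhd (Nat.iter i ltl (enc_list v)).
Proof.
  revert v; induction i; intros [|x v]; simpl nth.
  - symmetry; apply lhd_nil.
  - symmetry; apply lhd_cons.
  - now rewrite iter_ltl_nil, lhd_nil.
  - rewrite IHi, Nat.iter_succ_r; simpl; now rewrite ltl_cons.
Qed.

(* Every number codes a list; needed to decode existential witnesses. *)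
Lemma enc_list_surj n : exists l, enc_list l = n.
Proof.
  induction n as [n IH] using (well_founded_induction lt_wf).
  destruct n as [|n]; [now exists [] |].
  destruct (IH (csnd n)) as [l Hl]; [pose proof (csnd_le n); lia |].
  exists (cfst n :: l); simpl; rewrite Hl; unfold lcons; rewrite cpair_surj; lia.
Qed.

Fixpoint enc_code (c : code) : nat :=
  match c with
  | Zero => cpair 0 0
  | Succ => cpair 1 0
  | Proj i => cpair 2 i
  | Comp f gs =>
      cpair 3 (cpair (enc_code f)
                     ((fix enc_codes l := match l with
                                         | [] => 0
                                         | g :: l => lcons (enc_code g) (enc_codes l)
                                         end) gs))
  | Prec f g => cpair 4 (cpair (enc_code f) (enc_code g))
  | Mu f => cpair 5 (enc_code f)
  end.

Fixpoint enc_codes (l : list code) : nat :=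
  match l with [] => 0 | g :: l => lcons (enc_code g) (enc_codes l) end.

Lemma enc_code_comp f gs : enc_code (Comp f gs) = cpair 3 (cpair (enc_code f) (enc_codes gs)).
Proof. reflexivity. Qed.

Definition judg (e v y : nat) : nat := cpair 0 (cpair e (cpair v y)).
Definition judgs (gs v ws : nat) : nat := cpair 1 (cpair gs (cpair v ws)).

(* [j] is the conclusion of one rule of [eval] whose premises are judgements
   in the bit-set [B]; existential witnesses of the rule are bounded by [N]. *)
Definition eval_rule (N B j : nat) : bool :=
  let e := cfst (csnd j) in let v := cfst (csnd (csnd j)) in let y := csnd (csnd (csnd j)) in
  let tag := cfst e in let arg := csnd e in
  (tag =? 0) && (y =? 0)
  || (tag =? 1) && (y =? lhd v + 1)
  || (tag =? 2) && (y =? lhd (Nat.iter arg ltl v))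
  || (tag =? 3) && bex N (fun ws => Nat.testbit B (judgs (csnd arg) v ws)
                                    && Nat.testbit B (judg (cfst arg) ws y))
  || (tag =? 4) && (negb (v =? 0)
        && (if lhd v =? 0 then Nat.testbit B (judg (cfst arg) (ltl v) y)
            else bex N (fun r => Nat.testbit B (judg e (lcons (lhd v - 1) (ltl v)) r)
                       && Nat.testbit B (judg (csnd arg) (lcons (lhd v - 1) (lcons r (ltl v))) y))))
  || (tag =? 5) && (Nat.testbit B (judg arg (lcons y v) 0)
        && ball y (fun m => bex N (fun k => Nat.testbit B (judg arg (lcons m v) (k + 1))))).

Definition evals_rule (B j : nat) : bool :=
  let gs := cfst (csnd j) in let v := cfst (csnd (csnd j)) in let ws := csnd (csnd (csnd j)) in
  if gs =? 0 then ws =? 0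
  else negb (ws =? 0) && (Nat.testbit B (judg (lhd gs) v (lhd ws))
                          && Nat.testbit B (judgs (ltl gs) v (ltl ws))).

Definition rule_ok (N B j : nat) : bool :=
  if cfst j =? 0 then eval_rule N B j else (cfst j =? 1) && evals_rule B j.

(* [stage (s + 1)] is the bit-set of judgements [j <= s] obtained by one rule
   from [stage s]; these sets grow and exhaust the true judgements. *)
Definition stage (s : nat) : nat :=
  recf s 0 (fun i B => sumf (i + 1) (fun j => 2 ^ j * Nat.b2n (rule_ok (i + 1) B j))).

Lemma computable_rule_ok N B J :
  computable1 N -> computable1 B -> computable1 J ->
  computable1 (fun n => Nat.b2n (rule_ok (N n) (B n) (J n))).
Proof.
  intros; unfold rule_ok, eval_rule, evals_rule, judg, judgs, lcons, lhd, ltl; cbv beta zeta.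
  computability.
Qed.

Lemma computable_stage : computable1 stage.
Proof.
  apply (computable_rec (fun n => n) (fun _ => 0)
           (fun i B _ => sumf (i + 1) (fun j => 2 ^ j * Nat.b2n (rule_ok (i + 1) B j)))).
  all: computability_with ltac:(apply computable_rule_ok).
Qed.
Lemma bits_lt n (p : nat -> bool) : sumf n (fun j => 2 ^ j * Nat.b2n (p j)) < 2 ^ n.
Proof. induction n; simpl; [lia | destruct (p n); simpl; lia]. Qed.

Lemma bits_spec n (p : nat -> bool) k :
  Nat.testbit (sumf n (fun j => 2 ^ j * Nat.b2n (p j))) k = (k <? n) && p k.
Proof.
  induction n as [|n IH]; [apply Nat.bits_0|]; cbn [sumf].
  set (X := sumf n _) in *; pose proof (bits_lt n p) as HX; fold X in HX.
  assert (Hpow : 2 ^ n <> 0) by (apply Nat.pow_nonzero; lia).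
  destruct (Nat.ltb_spec k n).
  - rewrite <- (Nat.mod_pow2_bits_low _ n) by lia.
    rewrite Nat.mul_comm, Nat.Div0.mod_add, Nat.mod_small, IH by lia.
    destruct (Nat.ltb_spec k n); destruct (Nat.ltb_spec k (S n)); auto; lia.
  - replace k with ((k - n) + n) by lia; rewrite <- Nat.div_pow2_bits.
    rewrite Nat.mul_comm, Nat.div_add, Nat.div_small, Nat.add_0_l by lia.
    destruct (Nat.ltb_spec (k - n + n) (S n)) as [Hk | Hk].
    + replace (k - n) with 0 by lia; simpl; now destruct (p n).
    + destruct (k - n) as [|d]; [lia|]; rewrite andb_false_l.
      destruct (p n); simpl; apply Nat.bits_0.
Qed.

Definition derived (s j : nat) : bool := Nat.testbit (stage s) j.

Lemma derived_0 j : derived 0 j = false.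
Proof. apply Nat.bits_0. Qed.

Lemma derived_S s j : derived (S s) j = (j <? s + 1) && rule_ok (s + 1) (stage s) j.
Proof. apply bits_spec. Qed.

(* One-step derivability is monotone in the premises and in the witness
   bound; hence the stages increase. *)
Lemma eval_rule_mono N N' B B' j :
  eval_rule N B j = true -> N <= N' ->
  (forall x, Nat.testbit B x = true -> Nat.testbit B' x = true) -> eval_rule N' B' j = true.
Proof.
  intros H HN HB; unfold eval_rule in *; cbv zeta in *.
  repeat rewrite orb_true_iff in *.
  destruct H as [[[[[H|H]|H]|H]|H]|H]; [do 5 left | do 4 left; right | do 3 left; right | | |];
    auto; apply andb_true_iff in H as [Htag H]; rewrite Htag; simpl.
  - do 2 left; right.
    eapply bex_mono; eauto; intros i Hi; apply andb_true_iff in Hi as [Hi1 Hi2]; rewrite !HB; auto.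
  - left; right; apply andb_true_iff in H as [H1 H2]; rewrite H1; simpl.
    destruct (lhd _ =? 0); auto.
    eapply bex_mono; eauto; intros i Hi; apply andb_true_iff in Hi as [Hi1 Hi2]; rewrite !HB; auto.
  - right; apply andb_true_iff in H as [H1 H2]; rewrite HB by auto; simpl.
    eapply ball_mono; [exact H2 |]; intros i Hi.
    eapply bex_mono; [exact Hi | exact HN | auto].
Qed.

Lemma rule_ok_mono N N' B B' j :
  rule_ok N B j = true -> N <= N' ->
  (forall x, Nat.testbit B x = true -> Nat.testbit B' x = true) -> rule_ok N' B' j = true.
Proof.
  unfold rule_ok; intros H HN HB; destruct (cfst j =? 0); [eapply eval_rule_mono; eauto |].
  apply andb_true_iff in H as [H1 H2]; rewrite H1; simpl; unfold evals_rule in *.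
  destruct (cfst (csnd j) =? 0); auto.
  apply andb_true_iff in H2 as [H2 H3]; apply andb_true_iff in H3 as [H3 H4].
  rewrite H2, !HB; auto.
Qed.

Lemma derived_mono s s' j : s <= s' -> derived s j = true -> derived s' j = true.
Proof.
  induction 1 as [|s' _ IH]; auto; intros H; specialize (IH H); clear H.
  revert j IH; induction s' as [|s' IHs]; intros j H; [now rewrite derived_0 in H |].
  rewrite derived_S in *; apply andb_true_iff in H as [H1 H2]; apply andb_true_iff; split.
  - apply Nat.ltb_lt in H1; apply Nat.ltb_lt; lia.
  - eapply rule_ok_mono; [exact H2 | lia | exact IHs].
Qed.

Definition judgement_sound (j : nat) : Prop :=
  (forall c v y, j = judg (enc_code c) (enc_list v) y -> eval c v y) /\
  (forall gs v ws, j = judgs (enc_codes gs) (enc_list v) (enc_list ws) -> evals gs v ws).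

Ltac pair_simpl := repeat rewrite ?cfst_cpair, ?csnd_cpair in *.
Ltac bool_simpl H :=
  cbn [Nat.eqb] in H; rewrite ?andb_false_l, ?andb_true_l, ?orb_false_r, ?orb_false_l in H.

Lemma eval_rule_sound N B c v y :
  (forall j, Nat.testbit B j = true -> judgement_sound j) ->
  eval_rule N B (judg (enc_code c) (enc_list v) y) = true -> eval c v y.
Proof.
  intros HB Hok; unfold eval_rule, judg in Hok; cbv zeta in Hok; pair_simpl; bool_simpl Hok.
  assert (IH : forall c v y, Nat.testbit B (judg (enc_code c) (enc_list v) y) = true -> eval c v y)
    by (intros; eapply HB; eauto).
  destruct c; try rewrite enc_code_comp in Hok; cbn [enc_code] in Hok; pair_simpl; bool_simpl Hok.
  - apply Nat.eqb_eq in Hok; subst; constructor.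
  - apply Nat.eqb_eq in Hok; subst; rewrite lhd_enc_list, Nat.add_1_r; constructor.
  - apply Nat.eqb_eq in Hok; subst; rewrite <- nth_enc_list; constructor.
  - apply bex_spec in Hok as [ws [_ Hws]]; apply andb_true_iff in Hws as [H1 H2].
    destruct (enc_list_surj ws) as [wl <-].
    econstructor; [eapply HB; eauto | apply IH; eauto].
  - apply andb_true_iff in Hok as [Hv Hok].
    destruct v as [|[|n] v]; [discriminate | |]; cbn [enc_list] in Hok;
      rewrite lhd_cons, ltl_cons in Hok.
    + constructor; apply IH; auto.
    + apply bex_spec in Hok as [r [_ Hr]]; apply andb_true_iff in Hr as [H1 H2].
      replace (S n - 1) with n in * by lia.
      eapply ePrecS; apply IH; [exact H1 | exact H2].
  - apply andb_true_iff in Hok as [H1 H2]; constructor; [apply IH, H1 |].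
    intros m Hm; rewrite ball_spec in H2; apply H2, bex_spec in Hm as [k [_ Hk]].
    exists k; rewrite <- Nat.add_1_r; apply IH, Hk.
Qed.

Lemma evals_rule_sound B gs v ws :
  (forall j, Nat.testbit B j = true -> judgement_sound j) ->
  evals_rule B (judgs (enc_codes gs) (enc_list v) (enc_list ws)) = true -> evals gs v ws.
Proof.
  intros HB Hok; unfold evals_rule, judgs in Hok; cbv zeta in Hok; pair_simpl.
  destruct gs as [|g gs], ws as [|w ws]; cbn [enc_codes enc_list] in Hok;
    rewrite ?lcons_eqb0 in Hok; cbn [Nat.eqb negb andb] in Hok; try discriminate; [constructor |].
  rewrite !lhd_cons, !ltl_cons in Hok; apply andb_true_iff in Hok as [H1 H2].
  constructor; [apply (HB _ H1) | apply (HB _ H2)]; reflexivity.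
Qed.

Lemma derived_sound s j : derived s j = true -> judgement_sound j.
Proof.
  revert j; induction s as [|s IH]; intros j Hj; [now rewrite derived_0 in Hj |].
  rewrite derived_S in Hj; apply andb_true_iff in Hj as [_ Hok].
  split; intros ? ? ? ->; unfold rule_ok in Hok.
  - unfold judg at 1 in Hok; rewrite cfst_cpair in Hok.
    exact (eval_rule_sound _ (stage s) _ _ _ IH Hok).
  - unfold judgs at 1 in Hok; rewrite cfst_cpair in Hok; cbn [Nat.eqb] in Hok.
    apply andb_true_iff in Hok as [_ Hok].
    exact (evals_rule_sound (stage s) _ _ _ IH Hok).
Qed.

Definition eventually_derived (j : nat) : Prop :=
  exists s0, forall s, s0 <= s -> derived s j = true.

Definition derivable (c : code) (v : list nat) (y : nat) : Prop :=
  eventually_derived (judg (enc_code c) (enc_list v) y).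

Definition derivables (gs : list code) (v ws : list nat) : Prop :=
  eventually_derived (judgs (enc_codes gs) (enc_list v) (enc_list ws)).

Lemma eventually_derived_of_rule j K :
  (forall s, K <= s -> rule_ok (s + 1) (stage s) j = true) -> eventually_derived j.
Proof.
  intros H; exists (S (max j K)); intros [|s] Hs; [lia |].
  rewrite derived_S; apply andb_true_iff; split; [apply Nat.ltb_lt; lia | apply H; lia].
Qed.

Ltac rule_simpl :=
  unfold rule_ok, eval_rule, evals_rule, judg, judgs; cbv zeta; cbn [enc_code enc_codes];
  pair_simpl; cbn [Nat.eqb enc_list]; rewrite ?lcons_eqb0, ?lhd_cons, ?ltl_cons; cbn [Nat.eqb negb];
  rewrite ?andb_false_l, ?andb_true_l, ?orb_false_r, ?orb_false_l, ?orb_true_l, ?orb_true_r.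

Lemma derivable_zero v : derivable Zero v 0.
Proof. apply (eventually_derived_of_rule _ 0); intros; now rule_simpl. Qed.

Lemma derivable_succ v : derivable Succ v (S (hd 0 v)).
Proof.
  apply (eventually_derived_of_rule _ 0); intros; rule_simpl.
  rewrite lhd_enc_list, Nat.add_1_r; apply Nat.eqb_refl.
Qed.

Lemma derivable_proj i v : derivable (Proj i) v (nth i v 0).
Proof.
  apply (eventually_derived_of_rule _ 0); intros; rule_simpl.
  rewrite <- nth_enc_list; apply Nat.eqb_refl.
Qed.

Lemma derivable_comp f gs v ws y :
  derivables gs v ws -> derivable f ws y -> derivable (Comp f gs) v y.
Proof.
  intros [s1 H1] [s2 H2]; apply (eventually_derived_of_rule _ (max (enc_list ws) (max s1 s2))).
  intros s Hs; unfold derivable; rewrite enc_code_comp; rule_simpl.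
  apply bex_spec; exists (enc_list ws); split; [lia |].
  apply andb_true_iff; split; [apply H1 | apply H2]; lia.
Qed.

Lemma derivable_prec0 f g v y : derivable f v y -> derivable (Prec f g) (0 :: v) y.
Proof.
  intros [s1 H1]; apply (eventually_derived_of_rule _ s1); intros s Hs; rule_simpl.
  apply H1; lia.
Qed.

Lemma derivable_precS f g n v r y :
  derivable (Prec f g) (n :: v) r -> derivable g (n :: r :: v) y ->
  derivable (Prec f g) (S n :: v) y.
Proof.
  intros [s1 H1] [s2 H2]; apply (eventually_derived_of_rule _ (max r (max s1 s2))).
  intros s Hs; rule_simpl.
  apply bex_spec; exists r; split; [lia |]; replace (S n - 1) with n by lia.
  apply andb_true_iff; split; [apply (H1 s) | apply (H2 s)]; lia.
Qed.

(* The rule for minimisation has infinitely many instances of a finite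
   number of premises; a common stage bounds all of them. *)
Lemma finite_bound (P : nat -> nat -> Prop) n :
  (forall m B B', B <= B' -> P m B -> P m B') -> (forall m, m < n -> exists B, P m B) ->
  exists B, forall m, m < n -> P m B.
Proof.
  intros Hmono; induction n as [|n IH]; intros H; [exists 0; intros; lia |].
  destruct IH as [B1 HB1]; [intros; apply H; lia |].
  destruct (H n) as [B2 HB2]; [lia |].
  exists (max B1 B2); intros m Hm; destruct (Nat.eq_dec m n) as [->|];
    [eapply Hmono; [|eauto]; lia | eapply Hmono; [|apply HB1]; lia].
Qed.

Lemma derivable_mu f v n :
  derivable f (n :: v) 0 -> (forall m, m < n -> exists k, derivable f (m :: v) (S k)) ->
  derivable (Mu f) v n.
Proof.
  intros [s1 H1] Hlt.
  destruct (finite_bound (fun m B => exists k, k < B /\ forall s, B <= s ->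
               derived s (judg (enc_code f) (enc_list (m :: v)) (S k)) = true) n) as [B HB].
  - intros m B B' ? [k [Hk1 Hk2]]; exists k; split; [lia | intros; apply Hk2; lia].
  - intros m Hm; destruct (Hlt m Hm) as [k [s2 H2]].
    exists (max (S k) s2), k; split; [lia | intros; apply H2; lia].
  - apply (eventually_derived_of_rule _ (max B s1)); intros s Hs; rule_simpl.
    apply andb_true_iff; split; [apply (H1 s); lia |].
    apply ball_spec; intros m Hm; destruct (HB m Hm) as [k [Hk1 Hk2]].
    apply bex_spec; exists k; split; [lia |]; rewrite Nat.add_1_r; apply (Hk2 s); lia.
Qed.

Lemma derivables_nil v : derivables [] v [].
Proof. apply (eventually_derived_of_rule _ 0); intros; now rule_simpl. Qed.

Lemma derivables_cons g gs v y ys :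
  derivable g v y -> derivables gs v ys -> derivables (g :: gs) v (y :: ys).
Proof.
  intros [s1 H1] [s2 H2]; apply (eventually_derived_of_rule _ (max s1 s2)); intros s Hs.
  rule_simpl; apply andb_true_iff; split; [apply (H1 s) | apply (H2 s)]; lia.
Qed.

Fixpoint eval_derivable c v y (H : eval c v y) {struct H} : derivable c v y
with evals_derivables gs v ws (H : evals gs v ws) {struct H} : derivables gs v ws.
Proof.
  - destruct H.
    + apply derivable_zero.
    + apply derivable_succ.
    + apply derivable_proj.
    + eapply derivable_comp; eauto.
    + apply derivable_prec0; auto.
    + eapply derivable_precS; eauto.
    + apply derivable_mu; auto; intros m Hm; destruct (H0 m Hm) as [k Hk]; eauto.
  - destruct H; [apply derivables_nil | apply derivables_cons; auto].
Qed.

Definition halts_by (e x t : nat) : bool := bex t (fun y => derived t (judg e (lcons x 0) y)).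

Lemma computable_halts_by E X T :
  computable1 E -> computable1 X -> computable1 T ->
  computable1 (fun n => Nat.b2n (halts_by (E n) (X n) (T n))).
Proof.
  pose proof computable_stage; intros; unfold halts_by, derived, judg, lcons; computability.
Qed.

Lemma halts_by_sound c x t : halts_by (enc_code c) x t = true -> exists y, eval c [x] y.
Proof.
  unfold halts_by; rewrite bex_spec; intros [y [_ Hy]].
  exists y; apply (proj1 (derived_sound _ _ Hy)); reflexivity.
Qed.

Lemma halts_by_complete c x y :
  eval c [x] y -> exists T, forall t, T <= t -> halts_by (enc_code c) x t = true.
Proof.
  intros H; destruct (eval_derivable _ _ _ H) as [s0 Hs0].
  exists (max s0 (S y)); intros t Ht; apply bex_spec; exists y; split; [lia | apply Hs0; lia].
Qed.

Lemma halts_by_mono e x t t' : t <= t' -> halts_by e x t = true -> halts_by e x t' = true.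
Proof.
  intros Ht H; eapply bex_mono; [exact H | exact Ht |]; intros y; apply derived_mono, Ht.
Qed.

(* [least n p] is the least [k < n] satisfying [p], and [n] if there is none. *)
Definition least (n : nat) (p : nat -> bool) : nat :=
  sumf n (fun k => Nat.b2n (ball (k + 1) (fun j => negb (p j)))).

Lemma least_char n p m :
  m < n -> p m = true -> (forall j, j < m -> p j = false) -> least n p = m.
Proof.
  intros Hm H1 H2; unfold least.
  rewrite (sumf_ext _ _ (fun i => if i <? m then 1 else 0)); [apply sumf_indicator; lia |].
  intros k Hk; destruct (Nat.ltb_spec k m).
  - replace (ball _ _) with true; auto; symmetry; apply ball_spec; intros j Hj.
    rewrite H2 by lia; auto.
  - replace (ball _ _) with false; auto; symmetry; destruct (ball _ _) eqn:E; auto.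
    rewrite ball_spec in E; specialize (E m); rewrite H1 in E; discriminate E; lia.
Qed.

Lemma least_le n p : least n p <= n.
Proof. unfold least; induction n; cbn [sumf]; [lia|]; destruct (ball _ _); simpl; lia. Qed.

Lemma least_default n p : (forall j, j < n -> p j = false) -> least n p = n.
Proof.
  intros H; unfold least; rewrite (sumf_ext _ _ (fun i => if i <? n then 1 else 0));
    [apply sumf_indicator; lia |].
  intros k Hk; replace (k <? n) with true by (symmetry; apply Nat.ltb_lt, Hk).
  replace (ball _ _) with true; auto; symmetry.
  apply ball_spec; intros j Hj; rewrite H by lia; auto.
Qed.

Lemma least_spec n p k :
  k <= n -> p k = true ->
  least n p <= k /\ p (least n p) = true /\ forall j, j < least n p -> p j = false.
Proof.
  revert k; induction k as [k IH] using (well_founded_induction lt_wf); intros Hk Hp.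
  destruct (bex k p) eqn:E.
  - apply bex_spec in E as [j [Hj1 Hj2]].
    destruct (IH j Hj1) as [? ?]; auto; [lia | split; auto; lia].
  - assert (Hbelow : forall j, j < k -> p j = false).
    { intros j Hj; destruct (p j) eqn:Ej; auto.
      enough (bex k p = true) by congruence; apply bex_spec; eauto. }
    destruct (Nat.eq_dec k n) as [->|].
    + rewrite least_default; auto.
    + rewrite (least_char n p k); auto; lia.
Qed.

(* The minimum of a nonempty finite set (0 for the empty set). *)
Definition fin_min (x : nat) : nat := least x (Nat.testbit x).

Lemma computable_fin_min : computable1 fin_min.
Proof. unfold fin_min, least; computability. Qed.

Lemma testbit_lt a k : Nat.testbit a k = true -> k < a.
Proof.
  intros H; enough (2 ^ k <= a) by (pose proof (Nat.pow_gt_lin_r 2 k); lia).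
  destruct (le_lt_dec (2 ^ k) a); auto.
  rewrite Nat.testbit_odd, Nat.shiftr_div_pow2, Nat.div_small in H; auto; discriminate.
Qed.

Lemma fin_min_char x m :
  Nat.testbit x m = true -> (forall j, j < m -> Nat.testbit x j = false) -> fin_min x = m.
Proof. intros; apply least_char; auto using testbit_lt. Qed.

Lemma fin_min_spec x :
  x <> 0 -> Nat.testbit x (fin_min x) = true /\ forall j, j < fin_min x -> Nat.testbit x j = false.
Proof.
  intros Hx; assert (Hl : Nat.testbit x (Nat.log2 x) = true) by now apply Nat.bit_log2.
  destruct (least_spec x (Nat.testbit x) (Nat.log2 x)) as [_ H]; auto.
  apply Nat.lt_le_incl, testbit_lt, Hl.
Qed.

Lemma fin_min_lor x y :
  x <> 0 -> y <> 0 -> fin_min x < fin_min y -> fin_min (Nat.lor x y) = fin_min x.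
Proof.
  intros Hx Hy Hlt; destruct (fin_min_spec x Hx) as [X1 X2], (fin_min_spec y Hy) as [Y1 Y2].
  apply fin_min_char; [rewrite Nat.lor_spec, X1; auto |].
  intros j Hj; rewrite Nat.lor_spec, X2, Y2; auto; lia.
Qed.

Definition min_enum (e m t : nat) : bool :=
  bex t (fun x => negb (x =? 0) && (fin_min x =? m) && halts_by e x t).

Lemma computable_min_enum E M T :
  computable1 E -> computable1 M -> computable1 T ->
  computable1 (fun n => Nat.b2n (min_enum (E n) (M n) (T n))).
Proof.
  pose proof computable_fin_min; intros; unfold min_enum.
  computability_with ltac:(apply computable_halts_by).
Qed.

Lemma min_enum_mono e m t t' : t <= t' -> min_enum e m t = true -> min_enum e m t' = true.
Proof.
  intros Ht H; eapply bex_mono; [exact H | exact Ht |]; intros x Hx.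
  apply andb_true_iff in Hx as [Hx1 Hx2]; rewrite Hx1; eapply halts_by_mono; eauto.
Qed.

(* Requirement [k] asks that colour
   [csnd k =? 1] occur among the minima enumerated by program [cfst k].  Given
   the colours [G] (as a bit-set) of the numbers below [m], [k] is a candidate
   at [m] if [m] is such a minimum and no smaller one has the wanted colour. *)
Definition candidate (t m G k : nat) : bool :=
  min_enum (cfst k) m t
  && negb (bex m (fun m' => min_enum (cfst k) m' t
                            && (Nat.b2n (Nat.testbit G m') =? Nat.b2n (csnd k =? 1)))).

(* The least candidate [k <= m] colours [m]; without candidate, [m] gets
   colour [false]. *)
Definition color_step (t m G : nat) : bool :=
  let k := least m (candidate t m G) in candidate t m G k && (csnd k =? 1).

Definition color_table (t m : nat) : nat :=
  recf m 0 (fun i G => G + 2 ^ i * Nat.b2n (color_step t i G)).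

Definition approx_color (t m : nat) : bool := color_step t m (color_table t m).

Definition coloring (a : nat) : bool := approx_color a (fin_min a).

Lemma computable_color_step T M G :
  computable1 T -> computable1 M -> computable1 G ->
  computable1 (fun n => Nat.b2n (color_step (T n) (M n) (G n))).
Proof.
  intros; unfold color_step, least, candidate; cbv zeta.
  computability_with ltac:(apply computable_min_enum).
Qed.

Lemma coloring_computable : computable_coloring coloring.
Proof.
  enough (H : computable1 (fun a => Nat.b2n (coloring a)))
    by (destruct H as [c Hc]; exists c; exact Hc).
  pose proof computable_fin_min; unfold coloring, approx_color, color_table.
  computability_with ltac:(apply computable_color_step).
Qed.

Lemma color_table_bits t m m' :
  Nat.testbit (color_table t m) m' = (m' <? m) && approx_color t m'.
Proof.
  enough (color_table t m = sumf m (fun i => 2 ^ i * Nat.b2n (approx_color t i))) as ->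
    by apply bits_spec.
  induction m as [|m IH]; [reflexivity |].
  change (color_table t (S m)) with (color_table t m + 2 ^ m * Nat.b2n (approx_color t m)).
  cbn [sumf]; now rewrite <- IH.
Qed.

Definition cand (t k m : nat) : bool := candidate t m (color_table t m) k.

Lemma cand_eq t k m :
  cand t k m = min_enum (cfst k) m t
    && negb (bex m (fun m' => min_enum (cfst k) m' t
                              && (Nat.b2n (approx_color t m') =? Nat.b2n (csnd k =? 1)))).
Proof.
  unfold cand, candidate; do 2 f_equal; apply bex_ext; intros i Hi.
  rewrite color_table_bits; now replace (i <? m) with true by (symmetry; apply Nat.ltb_lt, Hi).
Qed.

Definition actor (t m : nat) : nat := least m (fun k => cand t k m).

Lemma approx_color_actor t m :
  approx_color t m = cand t (actor t m) m && (csnd (actor t m) =? 1).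
Proof. reflexivity. Qed.

Lemma actor_spec t k m :
  k <= m -> cand t k m = true -> actor t m <= k /\ cand t (actor t m) m = true.
Proof. intros Hk Hc; destruct (least_spec m (fun k => cand t k m) k) as [? []]; auto. Qed.

(* A requirement acts at most once: after acting at [m1], it is satisfied
   at every larger [m2]. *)
Lemma actor_unique t m1 m2 :
  cand t (actor t m1) m1 = true -> cand t (actor t m2) m2 = true ->
  actor t m1 = actor t m2 -> m1 = m2.
Proof.
  enough (H : forall a b, a < b -> cand t (actor t a) a = true -> cand t (actor t b) b = true ->
                          actor t a <> actor t b).
  { intros H1 H2 E; destruct (lt_eq_lt_dec m1 m2) as [[Hl|Hl]|Hl]; auto;
      [destruct (H _ _ Hl H1 H2 E) | destruct (H _ _ Hl H2 H1 (eq_sym E))]. }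
  intros a b Hab Ha Hb E.
  assert (Hcol : approx_color t a = (csnd (actor t b) =? 1))
    by (rewrite approx_color_actor, Ha, E; auto).
  rewrite cand_eq in Ha, Hb; rewrite E in Ha.
  apply andb_true_iff in Ha as [Ha _]; apply andb_true_iff in Hb as [_ Hb].
  rewrite negb_true_iff, (proj2 (bex_spec _ _)) in Hb; [discriminate |].
  exists a; split; auto; rewrite Ha, Hcol, Nat.eqb_refl; auto.
Qed.

Lemma approx_color_local M t1 t2 :
  (forall e m', e <= M -> m' <= M -> min_enum e m' t1 = min_enum e m' t2) ->
  forall m, m <= M -> approx_color t1 m = approx_color t2 m.
Proof.
  intros HM m; induction m as [m IH] using (well_founded_induction lt_wf); intros Hm.
  assert (Hc : forall k, k <= m -> cand t1 k m = cand t2 k m).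
  { intros k Hk; pose proof (cfst_le k); rewrite !cand_eq, HM by lia.
    do 2 f_equal; apply bex_ext; intros i Hi; rewrite HM, IH by lia; reflexivity. }
  assert (Ha : actor t1 m = actor t2 m).
  { unfold actor, least; apply sumf_ext; intros k Hk; f_equal; apply ball_ext; intros j Hj.
    rewrite Hc by lia; reflexivity. }
  rewrite !approx_color_actor, Ha, Hc; auto; apply least_le.
Qed.

(* Monotone boolean approximations stabilise (classically). *)
Lemma min_enum_stable e m : exists T, forall t, T <= t -> min_enum e m t = min_enum e m T.
Proof.
  destruct (classic (exists t, min_enum e m t = true)) as [[T HT] | Hn].
  - exists T; intros t Ht; rewrite HT; eapply min_enum_mono; eauto.
  - exists 0; intros t _; destruct (min_enum e m t) eqn:E, (min_enum e m 0) eqn:E0; eauto;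
      exfalso; eauto.
Qed.

Lemma min_enum_stable_below M :
  exists T, forall t, T <= t -> forall e m, e <= M -> m <= M -> min_enum e m t = min_enum e m T.
Proof.
  set (Stable e m B := forall t, B <= t -> min_enum e m t = min_enum e m B).
  assert (Hup : forall e m B B', B <= B' -> Stable e m B -> Stable e m B').
  { intros e m B B' HB H t Ht; rewrite (H t), (H B') by lia; auto. }
  destruct (finite_bound (fun e B => forall m, m < S M -> Stable e m B) (S M)) as [T HT].
  - intros e B B' HB H m Hm; eapply Hup; eauto.
  - intros e _; apply finite_bound; [intros m B B' ? ?; eapply Hup; eauto |].
    intros m _; apply min_enum_stable.
  - exists T; intros t Ht e m He Hm; apply HT; lia.
Qed.

Lemma approx_color_stable M :
  exists T, forall t, T <= t -> forall m, m <= M -> approx_color t m = approx_color T m.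
Proof.
  destruct (min_enum_stable_below M) as [T HT]; exists T; intros t Ht m Hm.
  apply (approx_color_local M); auto; intros; apply HT; auto.
Qed.

Lemma pigeonhole n m (g : nat -> nat) :
  (forall i, i < n -> g i < m) -> (forall i j, i < n -> j < n -> g i = g j -> i = j) -> n <= m.
Proof.
  intros Hr Hi.
  assert (Hnd : NoDup (map g (seq 0 n))).
  { apply NoDup_map_NoDup_ForallPairs; [| apply seq_NoDup].
    intros i j Hi' Hj'; apply in_seq in Hi', Hj'; apply Hi; lia. }
  assert (Hincl : incl (map g (seq 0 n)) (seq 0 m)).
  { intros x Hx; apply in_map_iff in Hx as [i [<- Hi2]]; apply in_seq in Hi2; apply in_seq.
    specialize (Hr i); lia. }
  pose proof (NoDup_incl_length Hnd Hincl) as H; now rewrite length_map, !length_seq in H.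
Qed.

Lemma increasing_elements (P : nat -> Prop) :
  (forall B, exists m, P m /\ B <= m) ->
  forall n B, exists h : nat -> nat,
    (forall i, i < n -> P (h i) /\ B <= h i) /\ (forall i j, i < j < n -> h i < h j).
Proof.
  intros Hunb n B; induction n as [|n [h [Hh1 Hh2]]]; [exists (fun _ => 0); split; intros; lia |].
  destruct (Hunb (B + sumf n (fun i => S (h i)))) as [m [Hm1 Hm2]].
  assert (Hbig : forall i, i < n -> h i < m).
  { intros i Hi; pose proof (sumf_term_le n (fun i => S (h i)) i Hi); cbv beta in *; lia. }
  exists (fun i => if i <? n then h i else m); split.
  - intros i Hi; destruct (Nat.ltb_spec i n); [apply Hh1; lia | split; auto; lia].
  - intros i j Hij; destruct (Nat.ltb_spec i n), (Nat.ltb_spec j n); try lia;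
      [apply Hh2; lia | apply Hbig; lia].
Qed.

(* Infinitely many pairwise disjoint sets have arbitrarily large minima:
   otherwise the minima (and [B] for the empty set) would map [B + 2] of them
   injectively into [0, B]. *)
Lemma large_minima (Fam : nat -> Prop) :
  inf_pairwise_disjoint Fam -> forall B, exists y, Fam y /\ y <> 0 /\ B <= fin_min y.
Proof.
  intros [f [HF [Hd Hdisj]]] B; apply NNPP; intros Hno.
  assert (Hlt : forall y, Fam y -> y <> 0 -> fin_min y < B).
  { intros y Hy Hy0; destruct (le_lt_dec B (fin_min y)); auto; exfalso; apply Hno; eauto. }
  set (g := fun i => if f i =? 0 then B else fin_min (f i)).
  enough (S (S B) <= S B) by lia.
  apply (pigeonhole _ _ g).
  - intros i Hi; unfold g; destruct (Nat.eqb_spec (f i) 0); [lia |].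
    specialize (Hlt _ (HF i) n); lia.
  - intros i j Hi Hj E; destruct (Nat.eq_dec i j) as [|Hij]; auto; exfalso; unfold g in E.
    destruct (Nat.eqb_spec (f i) 0), (Nat.eqb_spec (f j) 0).
    + apply (Hd i j Hij); congruence.
    + specialize (Hlt _ (HF j) n); lia.
    + specialize (Hlt _ (HF i) n); lia.
    + apply (Hdisj i j Hij (fin_min (f i))); unfold fin_mem; split; [apply fin_min_spec; auto |].
      rewrite E; apply fin_min_spec; auto.
Qed.

Lemma NU_member (Fam : nat -> Prop) x : Fam x -> x <> 0 -> NU Fam x.
Proof.
  intros Hx Hx0; split; auto.
  exists [x]; split; [intros z [<-|[]]; auto | simpl; now rewrite Nat.lor_0_r].
Qed.

Lemma NU_union2 (Fam : nat -> Prop) x y : Fam x -> Fam y -> x <> 0 -> NU Fam (Nat.lor x y).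
Proof.
  intros Hx Hy Hx0; split.
  - intros E; apply Nat.lor_eq_0_iff in E; tauto.
  - exists [x; y]; split; [intros z [<-|[<-|[]]]; auto | simpl; now rewrite Nat.lor_0_r].
Qed.

Section Requirement.

Variable Fam : nat -> Prop.
Variable prog : code.
Hypothesis Hprog : forall n, Fam n <-> exists y, eval prog [n] y.
Hypothesis Hlarge : forall B, exists y, Fam y /\ y <> 0 /\ B <= fin_min y.

Definition is_min (m : nat) : Prop := exists x, Fam x /\ x <> 0 /\ fin_min x = m.

Lemma min_enum_sound m t : min_enum (enc_code prog) m t = true -> is_min m.
Proof.
  unfold min_enum; rewrite bex_spec; intros [x [_ Hx]].
  apply andb_true_iff in Hx as [Hx Hh]; apply andb_true_iff in Hx as [Hx0 Hm].
  exists x; split; [apply Hprog; eapply halts_by_sound; eauto |].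
  split; [intros ->; discriminate | apply Nat.eqb_eq, Hm].
Qed.

Lemma min_enum_complete x :
  Fam x -> x <> 0 -> exists T, forall t, T <= t -> min_enum (enc_code prog) (fin_min x) t = true.
Proof.
  intros Hx Hx0; apply Hprog in Hx as [y Hy]; destruct (halts_by_complete _ _ _ Hy) as [T HT].
  exists (max T (S x)); intros t Ht; apply bex_spec; exists x; split; [lia |].
  rewrite Nat.eqb_refl, HT by lia; destruct x; [congruence | reflexivity].
Qed.

(* If all finite unions have colour [kap], so have in the limit all minima:
   a minimum [m] of [x] is also the minimum of the union of [x] with members
   of the family having larger minimum, which are arbitrarily large sets. *)
Lemma limit_color_monochromatic kap :
  (forall a, NU Fam a -> coloring a = kap) ->
  forall M, exists T, forall t, T <= t -> forall m, m <= M -> is_min m -> approx_color t m = kap.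
Proof.
  intros Hmono M; destruct (approx_color_stable M) as [T HT].
  exists T; intros t Ht m Hm [x [Hx [Hx0 <-]]].
  destruct (Hlarge (max (S (fin_min x)) T)) as [y [Hy [Hy0 Hyb]]].
  assert (Hxy : fin_min (Nat.lor x y) = fin_min x) by (apply fin_min_lor; auto; lia).
  assert (Hbig : T <= Nat.lor x y).
  { enough (fin_min y < Nat.lor x y) by lia; apply testbit_lt.
    rewrite Nat.lor_spec, (proj1 (fin_min_spec y Hy0)); apply orb_true_r. }
  rewrite HT, <- (HT (Nat.lor x y)), <- Hxy by lia; apply Hmono, NU_union2; auto.
Qed.

(* The requirement [k0] = "the colour [negb kap] occurs among the minima"
   is a candidate wherever the limit colour of all earlier minima is [kap]. *)
Lemma requirement_candidate kap t M m :
  (forall m', m' <= M -> is_min m' -> approx_color t m' = kap) -> m <= M ->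
  min_enum (enc_code prog) m t = true ->
  cand t (cpair (enc_code prog) (Nat.b2n (negb kap))) m = true.
Proof.
  intros Hlim HmM Hm; rewrite cand_eq, cfst_cpair, csnd_cpair, Hm; simpl.
  apply negb_true_iff; destruct (bex _ _) eqn:E; auto.
  apply bex_spec in E as [m' [Hm' Hc]]; apply andb_true_iff in Hc as [Hc1 Hc2].
  rewrite (Hlim m') in Hc2 by (eauto using min_enum_sound; lia).
  destruct kap; discriminate.
Qed.

(* The limit colours of the minima are not all equal to [kap]: otherwise
   the requirement [k0] asking for colour [negb kap] is a candidate at [k0 + 1]
   minima; it cannot act at any of them, and each smaller requirement acts at
   most once. *)
Lemma limit_colors_not_constant kap :
  ~ forall M, exists T, forall t, T <= t -> forall m, m <= M -> is_min m -> approx_color t m = kap.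
Proof.
  intros Hlim; set (k0 := cpair (enc_code prog) (Nat.b2n (negb kap))).
  destruct (increasing_elements is_min) with (n := S k0) (B := k0) as [h [Hh1 Hh2]].
  { intros B; destruct (Hlarge B) as [y [Hy [Hy0 HB]]]; exists (fin_min y); split; auto.
    exists y; auto. }
  assert (Hmax : forall i, i < S k0 -> h i <= h k0).
  { intros i Hi; destruct (Nat.eq_dec i k0) as [->|]; [lia | apply Nat.lt_le_incl, Hh2; lia]. }
  destruct (Hlim (h k0)) as [T1 HT1].
  destruct (finite_bound (fun i B => forall t, B <= t -> min_enum (enc_code prog) (h i) t = true)
              (S k0)) as [T2 HT2].
  { intros i B B' ? H t ?; apply H; lia. }
  { intros i Hi; destruct (Hh1 i Hi) as [[x [Hx [Hx0 <-]]] _]; apply min_enum_complete; auto. }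
  set (t := max T1 T2).
  assert (Hcand : forall i, i < S k0 -> cand t k0 (h i) = true).
  { intros i Hi; apply (requirement_candidate kap t (h k0)); auto;
      [apply HT1; lia | apply HT2; lia]. }
  enough (S k0 <= k0) by lia.
  apply (pigeonhole _ _ (fun i => actor t (h i))).
  - intros i Hi; destruct (actor_spec t k0 (h i)) as [Hle Hact]; [apply Hh1, Hi | auto |].
    destruct (Nat.eq_dec (actor t (h i)) k0) as [E|]; [exfalso | lia].
    pose proof (approx_color_actor t (h i)) as Hcol; rewrite Hact, E in Hcol.
    unfold k0 in Hcol; rewrite csnd_cpair in Hcol.
    rewrite (HT1 t ltac:(lia) (h i) (Hmax i Hi) (proj1 (Hh1 i Hi))) in Hcol.
    destruct kap; discriminate.
  - intros i j Hi Hj E.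
    assert (Hhij : h i = h j).
    { apply (actor_unique t); auto; apply actor_spec with k0; auto; apply Hh1; auto. }
    destruct (lt_eq_lt_dec i j) as [[Hl|Hl]|Hl]; auto;
      [specialize (Hh2 i j) | specialize (Hh2 j i)]; lia.
Qed.

End Requirement.

(* Colour by [coloring].  For a c.e. family with infinitely many disjoint
   members, if NU(S) had a single colour, all minima would have that colour
   in the limit, which is impossible. *)
Theorem theorem3p1 :
  exists c : nat -> bool,
    computable_coloring c /\
    forall S : nat -> Prop,
      c_e S -> inf_pairwise_disjoint S ->
      exists a b, NU S a /\ NU S b /\ c a <> c b.
Proof.
  exists coloring; split; [apply coloring_computable |].
  intros Fam [prog Hprog] Hdisj.
  pose proof (large_minima Fam Hdisj) as Hlarge.
  destruct (Hlarge 0) as [y0 [Hy0 [Hy00 _]]].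
  apply NNPP; intros Hmono.
  apply (limit_colors_not_constant Fam prog Hprog Hlarge (coloring y0)).
  apply limit_color_monochromatic; auto.
  intros a Ha; apply NNPP; intros Hne; apply Hmono; exists a, y0; auto using NU_member.
Qed.
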